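(* Let $M$ be a compact metric space, $C\subset M$ a subset, and $f\colon C\to M$ a surjective $1$-Lipschitz map. Then $M$ is the closure of $C$. *)

From Stdlib Require Import Reals List.
Open Scope R_scope.

Definition is_metric {T : Type} (d : T -> T -> R) : Prop :=
  (forall x y, 0 <= d x y) /\
  (forall x y, d x y = 0 <-> x = y) /\
  (forall x y, d x y = d y x) /\
  (forall x y z, d x z <= d x y + d y z).

Definition metric_open {T : Type} (d : T -> T -> R) (U : T -> Prop) : Prop :=
  forall x, U x -> exists e, 0 < e /\ forall y, d x y < e -> U y.

Definition metric_compact {T : Type} (d : T -> T -> R) : Prop :=
  forall (I : Type) (U : I -> T -> Prop),
    (forall i, metric_open d (U i)) ->
    (forall x, exists i, U i x) ->
    exists l : list I, forall x, exists i, In i l /\ U i x.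

Definition metric_closure {T : Type} (d : T -> T -> R) (C : T -> Prop) (x : T) : Prop :=
  forall e, 0 < e -> exists c, C c /\ d x c < e.

(** If [x] were at positive distance [e] from [C], pick a right inverse [h : M -> C]
    of [f]; it expands distances, since [f] is 1-Lipschitz.  Then the orbit
    [x, h x, h (h x), ...] is [e]-separated: [d (h^m x) (h^(m+k+1) x) >= d x (h^(k+1) x) >= e]
    because [h^(k+1) x] lies in [C].  A compact space has a finite [e/2]-net, and by
    the pigeonhole principle two points of the orbit share a net point, so they are
    closer than [e]. *)

From Stdlib Require Import Reals Lra Lia Classical IndefiniteDescription List.
Open Scope R_scope.

Lemma infinite_pigeonhole {A : Type} (l : list A) (P : A -> nat -> Prop) :
  (forall n, exists a, In a l /\ P a n) ->
  exists a m n, (m < n)%nat /\ P a m /\ P a n.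
Proof.
  revert P; induction l as [|a l IH]; intros P Hcov.
  - destruct (Hcov 0%nat) as [? [[] _]].
  - destruct (classic (exists n0, P a n0)) as [[n0 Hn0] | Hnone].
    + destruct (classic (exists k, P a (S n0 + k)%nat)) as [[k Hk] | Hlater].
      { exists a, n0, (S n0 + k)%nat; repeat split; auto; lia. }
      destruct (IH (fun b k => P b (S n0 + k)%nat)) as [b [m [n [Hmn [Hm Hn]]]]].
      { intro k; destruct (Hcov (S n0 + k)%nat) as [b [[<- | Hin] Hb]].
        - exfalso; eauto.
        - eauto. }
      exists b, (S n0 + m)%nat, (S n0 + n)%nat; repeat split; auto; lia.
    + apply IH; intro n; destruct (Hcov n) as [b [[<- | Hin] Hb]].
      * exfalso; eauto.
      * eauto.
Qed.

Section CompactMetric.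

Context {M : Type} (d : M -> M -> R).
Hypothesis Hd : is_metric d.

Lemma metric_ball_open (c : M) (r : R) : metric_open d (fun y => d c y < r).
Proof.
  destruct Hd as [_ [_ [_ Htri]]].
  intros y Hy; exists (r - d c y); split; [lra |].
  intros z Hz; pose proof (Htri c y z); lra.
Qed.

Lemma compact_finite_net (r : R) : metric_compact d -> 0 < r ->
  exists l : list M, forall y, exists c, In c l /\ d c y < r.
Proof.
  destruct Hd as [_ [Hzero _]].
  intros Hc Hr; apply (Hc M (fun c y => d c y < r)).
  - intro c; apply metric_ball_open.
  - intro y; exists y; replace (d y y) with 0 by (symmetry; apply Hzero; reflexivity); lra.
Qed.

Lemma compact_no_separated_sequence (e : R) (s : nat -> M) :
  metric_compact d -> 0 < e ->
  ~ (forall m n, (m < n)%nat -> e <= d (s m) (s n)).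
Proof.
  destruct Hd as [_ [_ [Hsym Htri]]].
  intros Hc He Hsep.
  destruct (compact_finite_net (e / 2) Hc ltac:(lra)) as [l Hl].
  destruct (infinite_pigeonhole l (fun c n => d c (s n) < e / 2)) as [c [m [n [Hmn [Hm Hn]]]]].
  { intro n; apply Hl. }
  pose proof (Hsep m n Hmn); pose proof (Htri (s m) c (s n)); rewrite Hsym in Hm; lra.
Qed.

Lemma not_closure_separated (C : M -> Prop) (x : M) :
  ~ metric_closure d C x -> exists e, 0 < e /\ forall c, C c -> e <= d x c.
Proof.
  intro Hnc; apply NNPP; intro Hno; apply Hnc; intros e He.
  apply NNPP; intro Hfar; apply Hno; exists e; split; [exact He |].
  intros c Hc; apply Rnot_lt_le; intro Hlt; apply Hfar; eauto.
Qed.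

Lemma expanding_orbit_separated (C : M -> Prop) (h : M -> M) (x : M) (e : R) :
  (forall y z, d y z <= d (h y) (h z)) -> (forall y, C (h y)) ->
  (forall c, C c -> e <= d x c) ->
  forall m n, (m < n)%nat -> e <= d (Nat.iter m h x) (Nat.iter n h x).
Proof.
  intros Hexp HC Hsep m n Hmn.
  replace n with (m + S (n - S m))%nat by lia; generalize (n - S m)%nat as k; clear n Hmn.
  induction m as [|m IH]; intro k.
  - apply Hsep; simpl; apply HC.
  - eapply Rle_trans; [apply (IH k) | apply Hexp].
Qed.

End CompactMetric.

Theorem mainTheorem12 (M : Type) (d : M -> M -> R)
  (Hd : is_metric d) (Hc : metric_compact d)
  (C : M -> Prop) (f : {x : M | C x} -> M)
  (Hlip : forall x y : {x : M | C x}, d (f x) (f y) <= d (proj1_sig x) (proj1_sig y))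
  (Hsurj : forall y : M, exists x : {x : M | C x}, f x = y) :
  forall x : M, metric_closure d C x.
Proof.
  intro x; apply NNPP; intro Hnc.
  destruct (not_closure_separated d C x Hnc) as [e [He Hsep]].
  destruct (functional_choice _ Hsurj) as [g Hg].
  pose (h y := proj1_sig (g y)).
  assert (Hexp : forall y z, d y z <= d (h y) (h z)).
  { intros y z; rewrite <- (Hg y), <- (Hg z) at 1; apply Hlip. }
  apply (compact_no_separated_sequence d Hd e (fun n => Nat.iter n h x) Hc He).
  apply (expanding_orbit_separated d C h x e Hexp); [intro y; exact (proj2_sig (g y)) | exact Hsep].
Qed.
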